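(* A term $t\in\mathtt T_J$ is a $\to_{wh}$-normal form if and only if $t\in\mathtt n\cup\mathtt a$, where $\mathtt n ::= x \mid \mathtt n(u,y.\mathtt n)$ (neutral terms) and $\mathtt a ::= \lambda x.t \mid \mathtt n(u,y.\mathtt a)$ (answers), with $u,t$ arbitrary terms.
   Context: Terms $\mathtt T_J$: $t,u,r ::= x \mid \lambda x.t \mid t(u,y.r)$ ($y$ bound in $r$), up to $\alpha$-equivalence; $\{u/x\}t$ is capture-avoiding substitution. Neutral list contexts $\mathtt D_n ::= \Diamond \mid \mathtt n(u,y.\mathtt D_n)$; weak-head contexts $\mathtt W ::= \Diamond \mid \mathtt W(u,y.r) \mid \mathtt n(u,y.\mathtt W)$. Weak-head reduction: $\mathtt W\langle \mathtt D_n\langle\lambda x.s\rangle(u,y.r)\rangle \to_{wh} \mathtt W\langle \{\{u/x\}\mathtt D_n\langle s\rangle/y\}r\rangle$ (variables bound by $\mathtt D_n$ not free in $u$, $x$ not occurring in $\mathtt D_n$). A $\to_{wh}$-normal form is a term with no $\to_{wh}$-reduct. *)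

From Stdlib Require Import Arith.

(* t, u, r ::= x | \x.t | t(u, y.r)   -- in [gapp t u r], r binds one variable (index 0). *)
Inductive tm : Type :=
| var  : nat -> tm
| lam  : tm -> tm
| gapp : tm -> tm -> tm -> tm.

Fixpoint lift (k c : nat) (t : tm) : tm :=
  match t with
  | var n => if Nat.leb c n then var (n + k) else var n
  | lam s => lam (lift k (S c) s)
  | gapp t1 t2 r => gapp (lift k c t1) (lift k c t2) (lift k (S c) r)
  end.

(* subst j u t : capture-avoiding substitution of u (a term living outside the j
   binders crossed so far) for index j in t; indices above j are decremented. *)
Fixpoint subst (j : nat) (u : tm) (t : tm) : tm :=
  match t with
  | var n => if Nat.eqb n j then lift j 0 u
             else if Nat.ltb j n then var (n - 1) else var n
  | lam s => lam (subst (S j) u s)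
  | gapp t1 t2 r => gapp (subst j u t1) (subst j u t2) (subst (S j) u r)
  end.

Definition subst0 (u t : tm) : tm := subst 0 u t.

Inductive neutral : tm -> Prop :=
| neutral_var : forall x, neutral (var x)
| neutral_gapp : forall n u n', neutral n -> neutral n' -> neutral (gapp n u n').

Inductive answer : tm -> Prop :=
| answer_lam : forall t, answer (lam t)
| answer_gapp : forall n u a, neutral n -> answer a -> answer (gapp n u a).

Inductive dctx : Type :=
| DHole : dctx
| DCons : tm -> tm -> dctx -> dctx.

Inductive dctx_wf : dctx -> Prop :=
| dwf_hole : dctx_wf DHole
| dwf_cons : forall n u D, neutral n -> dctx_wf D -> dctx_wf (DCons n u D).

Fixpoint plugD (D : dctx) (s : tm) : tm :=
  match D with
  | DHole => s
  | DCons n u D' => gapp n u (plugD D' s)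
  end.

(* number of binders crossed by the hole of D *)
Fixpoint depthD (D : dctx) : nat :=
  match D with
  | DHole => 0
  | DCons _ _ D' => S (depthD D')
  end.

Inductive wctx : Type :=
| WHole : wctx
| WLeft : wctx -> tm -> tm -> wctx
| WRight : tm -> tm -> wctx -> wctx.

Inductive wctx_wf : wctx -> Prop :=
| wwf_hole : wctx_wf WHole
| wwf_left : forall W u r, wctx_wf W -> wctx_wf (WLeft W u r)
| wwf_right : forall n u W, neutral n -> wctx_wf W -> wctx_wf (WRight n u W).

Fixpoint plugW (W : wctx) (s : tm) : tm :=
  match W with
  | WHole => s
  | WLeft W' u r => gapp (plugW W' s) u r
  | WRight n u W' => gapp n u (plugW W' s)
  end.

(* In de Bruijn form, s lies under the depthD D binders of D (plus x = index 0),
   so u must be lifted by depthD D; the side conditions of the paper are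
   automatic. *)
Inductive wh : tm -> tm -> Prop :=
| wh_step : forall W D s u r,
    wctx_wf W -> dctx_wf D ->
    wh (plugW W (gapp (plugD D (lam s)) u r))
       (plugW W (subst0 (plugD D (subst0 (lift (depthD D) 0 u) s)) r)).

Definition wh_normal (t : tm) : Prop := forall t', ~ wh t t'.


(* A redex [D<\x.s>(u,y.r)] is neither neutral nor an answer, because its head
   [D<\x.s>] is an answer and hence not neutral; and both classes are closed
   under taking the subterm at the hole of a weak-head context, so no neutral
   term or answer contains a weak-head redex.  Conversely, in a normal
   application [t(u,y.r)] the head [t] is normal, hence (by induction) neutral,
   since an answer head [D<\x.s>] would fire; the body [r] is then in weak-head
   position too, so it is normal, hence neutral or an answer. *)

Lemma neutral_plugD_lam : forall D s, ~ neutral (plugD D (lam s)).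
Proof.
  induction D as [| n u D IHD]; simpl; intros s Hn; inversion Hn; subst.
  eapply IHD; eassumption.
Qed.

Lemma answer_plugD_lam : forall t,
  answer t -> exists D s, dctx_wf D /\ t = plugD D (lam s).
Proof.
  induction 1 as [s | n u a Hn _ [D [s [HD ->]]]].
  - exists DHole, s; split; [constructor | reflexivity].
  - exists (DCons n u D), s; split; [constructor; assumption | reflexivity].
Qed.

Lemma redex_not_neutral_answer : forall D s u r,
  ~ (neutral (gapp (plugD D (lam s)) u r) \/ answer (gapp (plugD D (lam s)) u r)).
Proof.
  intros D s u r [H | H]; inversion H; subst; eapply neutral_plugD_lam; eassumption.
Qed.

Lemma neutral_answer_plugW : forall W t, wctx_wf W ->
  neutral (plugW W t) \/ answer (plugW W t) -> neutral t \/ answer t.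
Proof.
  induction 1 as [| W u r _ IHW | n u W _ _ IHW]; simpl; intros H; [exact H | |];
    apply IHW; destruct H as [H | H]; inversion H; subst; auto.
Qed.

Lemma wh_gapp_l : forall t t' u r, wh t t' -> wh (gapp t u r) (gapp t' u r).
Proof.
  intros t t' u r [W D s u0 r0 HW HD].
  exact (wh_step (WLeft W u r) D s u0 r0 (wwf_left W u r HW) HD).
Qed.

Lemma wh_gapp_r : forall n u r r', neutral n -> wh r r' -> wh (gapp n u r) (gapp n u r').
Proof.
  intros n u r r' Hn [W D s u0 r0 HW HD].
  exact (wh_step (WRight n u W) D s u0 r0 (wwf_right n u W Hn HW) HD).
Qed.

Lemma wh_normal_gapp_l : forall t u r, wh_normal (gapp t u r) -> wh_normal t.
Proof. intros t u r Hnf t' Ht; exact (Hnf _ (wh_gapp_l t t' u r Ht)). Qed.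

Lemma wh_normal_gapp_r : forall n u r,
  neutral n -> wh_normal (gapp n u r) -> wh_normal r.
Proof. intros n u r Hn Hnf r' Hr; exact (Hnf _ (wh_gapp_r n u r r' Hn Hr)). Qed.

Lemma wh_normal_answer_head : forall a u r, answer a -> ~ wh_normal (gapp a u r).
Proof.
  intros a u r Ha Hnf.
  destruct (answer_plugD_lam a Ha) as [D [s [HD ->]]].
  exact (Hnf _ (wh_step WHole D s u r wwf_hole HD)).
Qed.

Lemma wh_normal_neutral_answer : forall t, wh_normal t -> neutral t \/ answer t.
Proof.
  induction t as [x | s _ | t IHt u _ r IHr]; intros Hnf.
  - left; constructor.
  - right; constructor.
  - destruct (IHt (wh_normal_gapp_l t u r Hnf)) as [Ht | Ht].
    + destruct (IHr (wh_normal_gapp_r t u r Ht Hnf)); [left | right];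
        constructor; assumption.
    + exfalso; exact (wh_normal_answer_head t u r Ht Hnf).
Qed.

Lemma wh_not_neutral_answer : forall t t', wh t t' -> ~ (neutral t \/ answer t).
Proof.
  intros t t' [W D s u r HW HD] H.
  exact (redex_not_neutral_answer D s u r (neutral_answer_plugW W _ HW H)).
Qed.

Theorem mainTheorem5 : forall t : tm, wh_normal t <-> (neutral t \/ answer t).
Proof.
  intro t; split.
  - apply wh_normal_neutral_answer.
  - intros H t' Ht; exact (wh_not_neutral_answer t t' Ht H).
Qed.
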